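(* Let $q$ be a power of an odd prime and let $k\geq d\geq 1$ be integers. Then \[ \bigl|\Delta_k\bigl((\mathbb{F}_q^d)^{k+1}\setminus D\bigr)\bigr|\approx q^{d(k+1)-\binom{d+1}{2}}, \] where $\Delta_k(S)$, for a set $S$ of configurations, denotes the set of congruence classes containing at least one element of $S$.
   Context: $\mathbb{F}_q^d$ carries the dot product $x\cdot y=\sum_i x_iy_i$; $O(\mathbb{F}_q^d)$ is the group of linear maps preserving it. Configurations $x,y\in(\mathbb{F}_q^d)^{k+1}$ are congruent if there exist $\theta\in O(\mathbb{F}_q^d)$ and $z\in\mathbb{F}_q^d$ with $y^i=\theta x^i+z$ for all $i$. For $1\leq r<d$, $D_r\subset(\mathbb{F}_q^d)^{k+1}$ is the set of configurations $(x^1,\dots,x^{k+1})$ whose affine span is an $r$-dimensional affine subspace of $\mathbb{F}_q^d$, and $D=\bigcup_{1\leq r<d}D_r$. The notation $X\approx Y$ means $c_1Y\leq X\leq c_2Y$ for positive constants independent of $q$ (allowed to depend on $d$). *)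

From HB Require Import structures.
From mathcomp Require Import all_boot all_order all_algebra.
Set Implicit Arguments. Unset Strict Implicit. Unset Printing Implicit Defensive.
Import Order.TTheory GRing.Theory Num.Theory.
Local Open Scope ring_scope.

Definition dotp (F : fieldType) (d : nat) (x y : 'rV[F]_d) : F :=
  \sum_(i < d) x 0 i * y 0 i.

Definition orthogonal_map (F : fieldType) (d : nat) (M : 'M[F]_d) : Prop :=
  forall x y : 'rV[F]_d, dotp (x *m M) (y *m M) = dotp x y.

Definition config (F : finFieldType) (d k : nat) := {ffun 'I_k.+1 -> 'rV[F]_d}.

Definition congruent (F : finFieldType) (d k : nat) (x y : config F d k) : Prop :=
  exists M : 'M[F]_d, orthogonal_map M /\
  exists z : 'rV[F]_d, forall i, y i = x i *m M + z.

Definition affdim (F : finFieldType) (d k : nat) (x : config F d k) : nat :=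
  \rank (\matrix_(i < k.+1) (x i - x ord0)).

(* D = union over 1 <= r < d of D_r. *)
Definition inD (F : finFieldType) (d k : nat) (x : config F d k) : bool :=
  (0 < affdim x < d)%N.

Definition cong_class (F : finFieldType) (d k : nat) (x : config F d k)
  : {set config F d k} :=
  [set y : config F d k | [exists M : 'M[F]_d,
              [forall u : 'rV[F]_d, forall v : 'rV[F]_d,
                 dotp (u *m M) (v *m M) == dotp u v]
              && [exists z : 'rV[F]_d, [forall i, y i == x i *m M + z]]]].

Lemma cong_classP (F : finFieldType) (d k : nat) (x y : config F d k) :
  reflect (congruent x y) (y \in cong_class x).
Proof.
rewrite inE; apply: (iffP existsP) => [[M /andP[/forallP oM /existsP[z /forallP Hz]]]|[M [oM [z Hz]]]].
  exists M; split; first by move=> u v; apply/eqP; exact: (forallP (oM u)).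
  by exists z => i; apply/eqP.
exists M; apply/andP; split; first by apply/forallP=> u; apply/forallP=> v; apply/eqP.
by apply/existsP; exists z; apply/forallP=> i; apply/eqP.
Qed.

Definition Delta (F : finFieldType) (d k : nat) (S : {set config F d k})
  : {set {set config F d k}} :=
  [set cong_class x | x in S].

Definition nondeg (F : finFieldType) (d k : nat) : {set config F d k} :=
  [set x | ~~ inD x].

(** Let [q = #|F|] and [e = d (k + 1) - binomial(d + 1, 2)].  A configuration is
    determined up to congruence by the Gram matrix of its edge vectors
    [x^(i+1) - x^1].  Upper bound: if the edges span [F^d], pick [d] of them
    forming a basis; the inner products of all edges with these form a [k x d]
    matrix whose [d x d] block is symmetric, so it is encoded by
    [binomial(d + 1, 2) + (k - d) d = e] entries, and it recovers the edges up to
    an orthogonal map.  With at most [k^d] choices of basis, plus the single class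
    of configurations with all points equal, there are at most [(1 + k^d) q^e]
    classes.  Lower bound: edge matrices whose top [d x d] block is lower
    triangular, with diagonal entries in a fixed set of representatives of
    [F^* / {1, -1}], are determined by their Gram matrix (uniqueness of the
    Cholesky factor); as [q] is odd there are
    [((q - 1) / 2)^d q^(k d - binomial(d + 1, 2)) >= 3^(-d) q^e] of them. *)

From HB Require Import structures.
From mathcomp Require Import all_boot all_order all_algebra zify fingroup cyclic.
Import Order.TTheory GRing.Theory Num.Theory FinRing.Theory.
Set Implicit Arguments. Unset Strict Implicit. Unset Printing Implicit Defensive.
Local Open Scope ring_scope.

Lemma natr_card_eq0 (R : finNzRingType) : #|R|%:R = 0 :> R.
Proof. by rewrite -cardsT -zmodXgE (expg_cardG (G := [set: R]%G)) ?inE. Qed.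

Lemma two_neq0 (R : finNzRingType) : odd #|R| -> 2%:R != 0 :> R.
Proof.
apply: contraTneq => two0; have char2 : 2 \in [pchar R] by rewrite inE two0 eqxx.
by rewrite -dvdn2 (dvdn_pcharf char2) natr_card_eq0.
Qed.

Section OddOrderField.
Variable F : finFieldType.

Definition sign_reps : {set F} :=
  [set x | (x != 0) && (enum_rank x < enum_rank (- x))%N].

Lemma sign_reps_neq0 x : x \in sign_reps -> x != 0.
Proof. by rewrite inE => /andP[]. Qed.

Lemma sign_reps_sqr_inj : {in sign_reps &, injective (fun x => x ^+ 2)}.
Proof.
move=> a b aS bS /eqP; rewrite -subr_eq0 subr_sqr mulf_eq0 subr_eq0 addr_eq0.
case/orP=> [/eqP //|/eqP a_opp_b]; move: aS bS; rewrite !inE a_opp_b opprK.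
by case/andP=> _ lt_ba /andP[_ lt_ab]; have := ltn_trans lt_ab lt_ba; rewrite ltnn.
Qed.

Lemma card_sign_reps : odd #|F| -> #|F| = (#|sign_reps|.*2).+1.
Proof.
move=> oddF; set H := sign_reps.
have opp_neq (x : F) : x != 0 -> - x != x.
  move=> x0; apply: contraTneq (two_neq0 oddF) => opp_x; rewrite negbK.
  have : 2%:R * x == 0 by rewrite mulr_natl mulr2n -{1}opp_x addNr.
  by rewrite mulf_eq0 (negbTE x0) orbF.
have nonzeroE : [set~ 0] = H :|: [set - x | x in H].
  apply/setP=> x; rewrite !inE; apply/idP/idP => [x0|].
    rewrite x0 /=; case: ltngtP => //= [rank_gt|/val_inj/enum_rank_inj opp_x].
      apply/imsetP; exists (- x); last by rewrite opprK.
      by rewrite inE oppr_eq0 x0 opprK.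
    by move: (opp_neq x x0); rewrite -opp_x eqxx.
  case/orP=> [/andP[] //|/imsetP[y]]; rewrite inE => /andP[y0 _] ->; by rewrite oppr_eq0.
have disjoint_H : H :&: [set - x | x in H] = set0.
  apply/setP=> x; rewrite !inE; apply/negP => /andP[/andP[_ lt_x] /imsetP[y]].
  rewrite inE => /andP[_ lt_y] x_opp_y; move: lt_x; rewrite x_opp_y opprK.
  by move/(ltn_trans lt_y); rewrite ltnn.
have := cardsC1 (0 : F); rewrite nonzeroE cardsU disjoint_H cards0 subn0.
rewrite card_imset; last exact: oppr_inj.
rewrite -addnn => ->; rewrite prednK //; apply/card_gt0P; by exists 0.
Qed.

Lemma leq_card_sign_reps : odd #|F| -> (#|F| <= 3 * #|sign_reps|)%N.
Proof.
move=> oddF; have gt1 := card_finNzRing_gt1 F.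
by rewrite (card_sign_reps oddF) in gt1 *; lia.
Qed.

End OddOrderField.

Lemma sum_ord_ltn m t : (\sum_(i < m) (i < t))%N = minn m t.
Proof.
elim: m => [|m IHm]; first by rewrite big_ord0 min0n.
by rewrite big_ord_recr /= IHm; case: ltnP; lia.
Qed.

Lemma card_ord_leq_pairs m n : (n <= m)%N ->
  #|[set p : 'I_m * 'I_n | (p.1 <= p.2)%N]| = 'C(n.+1, 2).
Proof.
move=> lenm; rewrite -sum1dep_card big_mkcond /=.
rewrite -(pair_bigA _ (fun (i : 'I_m) (j : 'I_n) => if i <= j then 1 else 0)%N) /=.
rewrite exchange_big -bin2_sum big_mkord big_ord_recl /=; apply: eq_bigr => j _.
rewrite -[RHS](minn_idPr (leq_trans (ltn_ord j) lenm)) -sum_ord_ltn.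
by apply: eq_bigr => i _; rewrite ltnS; case: leqP.
Qed.

Lemma card_ord_gtn_pairs m n : (n <= m)%N ->
  #|[set p : 'I_m * 'I_n | (p.2 < p.1)%N]| = (m * n - 'C(n.+1, 2))%N.
Proof.
move=> lenm; have := cardsC [set p : 'I_m * 'I_n | (p.1 <= p.2)%N].
rewrite card_ord_leq_pairs // card_prod !card_ord => <-; rewrite addKn.
by apply: eq_card => p; rewrite !inE ltnNge.
Qed.

Lemma bin2S_double n : ('C(n.+1, 2)).*2 = (n.+1 * n)%N.
Proof. by rewrite bin2 /= -[in RHS](odd_double_half (n.+1 * n)) oddM /= andNb. Qed.

Lemma exponent_split_gram d k : (d <= k)%N ->
  (d * k.+1 - 'C(d.+1, 2) = 'C(d.+1, 2) + (k - d) * d)%N.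
Proof.
move=> dk; have := bin2S_double d; have : (d * d <= k * d)%N by rewrite leq_mul2r dk orbT.
rewrite mulnBl; nia.
Qed.

Lemma exponent_split_trig d k : (d <= k)%N ->
  (d * k.+1 - 'C(d.+1, 2) = d + (k * d - 'C(d.+1, 2)))%N.
Proof.
move=> dk; have := bin2S_double d; have : (d * d <= k * d)%N by rewrite leq_mul2r dk orbT.
nia.
Qed.

Section RowSubmatrices.
Variables (F : fieldType) (m n : nat).
Implicit Types (A V W : 'M[F]_(m, n)) (s : 'I_n -> 'I_m).

Lemma exists_rowsub_unitmx A :
  \rank A = n -> exists s : {ffun 'I_n -> 'I_m}, rowsub s A \in unitmx.
Proof.
move=> rankA; move: (maxrankfun A) (maxrowsub_free A); rewrite rankA => f free_f.
by exists (finfun f); rewrite -row_free_unit (eq_rowsub _ (ffunE f)).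
Qed.

Lemma rowsub_unitmx_inj A s : rowsub s A \in unitmx -> injective s.
Proof.
move=> unit_sA a b eq_sab.
have row1 c : row c (rowsub s A) *m invmx (rowsub s A) = row c 1%:M.
  by rewrite -row_mul mulmxV.
have /rowP/(_ a) : row a (1%:M : 'M[F]_n) = row b 1%:M.
  by rewrite -!row1 !row_rowsub eq_sab.
by rewrite !mxE eqxx eq_sym; case: eqP => // _ /eqP; rewrite oner_eq0.
Qed.

Lemma tr_rowsub_gram s V :
  (rowsub s (V *m (rowsub s V)^T))^T = rowsub s (V *m (rowsub s V)^T).
Proof. by rewrite -mul_rowsub_mx trmx_mul trmxK. Qed.

Lemma gram_orthogonal V W s :
  rowsub s V \in unitmx -> V *m (rowsub s V)^T = W *m (rowsub s W)^T ->
  exists2 M : 'M[F]_n, M *m M^T = 1%:M & W = V *m M.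
Proof.
move=> unitA gramVW; set A := rowsub s V in unitA gramVW; set B := rowsub s W in gramVW.
have gramAB : A *m A^T = B *m B^T by rewrite !mul_rowsub_mx gramVW.
have unitB : B \in unitmx.
  have : A *m A^T \in unitmx by rewrite unitmx_mul unitmx_tr unitA.
  by rewrite gramAB unitmx_mul => /andP[].
have unitBt : B^T \in unitmx by rewrite unitmx_tr.
exists (invmx A *m B).
  rewrite trmx_mul !mulmxA -(mulmxA _ B) -gramAB mulmxA mulVmx // mul1mx.
  by rewrite trmx_inv mulmxV // unitmx_tr.
apply: (can_inj (mulmxK unitBt)).
by rewrite -!mulmxA -gramAB (mulmxA (invmx A)) mulVmx // mul1mx gramVW.
Qed.

End RowSubmatrices.

Section TopTriangularBlock.
Variables (F : fieldType) (m n : nat) (lenm : (n <= m)%N).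
Implicit Types X Y : 'M[F]_(m, n).

Definition top_block X : 'M[F]_n := rowsub (widen_ord lenm) X.

Lemma rank_trig_top_block X :
  is_trig_mx (top_block X) -> (forall s, top_block X s s != 0) -> \rank X = n.
Proof.
move=> trigX diagX; apply/eqP; rewrite eqn_leq rank_leq_col /=.
have unitX : top_block X \in unitmx.
  rewrite unitmxE unitfE det_trig // prodf_seq_neq0.
  by apply/allP => s _; apply: diagX.
by rewrite -[X in (X <= _)%N](mxrank_unit unitX) mxrankS // rowsub_sub.
Qed.

Lemma trig_gram_inj (S : {pred F}) X Y :
  0 \notin S -> {in S &, injective (fun a => a ^+ 2)} ->
  is_trig_mx (top_block X) -> is_trig_mx (top_block Y) ->
  (forall s, top_block X s s \in S) -> (forall s, top_block Y s s \in S) ->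
  X *m X^T = Y *m Y^T -> X = Y.
Proof.
move=> S0 sqr_inj /is_trig_mxP trigX /is_trig_mxP trigY SX SY gramXY.
have gram i j : \sum_u X i u * X j u = \sum_u Y i u * Y j u.
  have /matrixP/(_ i j) := gramXY; rewrite !mxE.
  by under eq_bigr do rewrite mxE; under [RHS]eq_bigr do rewrite mxE.
(* Column by column: with [w] the row of the diagonal entry of column [t], the
   inner product of rows [i] and [w] gives [X i t * X w t] once the earlier
   columns are known, and for [i = w] this fixes [X w t] through its square. *)
suff col_eq N (t : 'I_n) : (t < N)%N -> forall i, X i t = Y i t.
  by apply/matrixP => i t; apply: (col_eq t.+1).
elim: N t => // N IHN t; rewrite ltnS leq_eqVlt => /predU1P[tN|]; last exact: IHN.
set w := widen_ord lenm t.
have diag_prod i : X i t * X w t = Y i t * Y w t.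
  have := gram i w; rewrite (bigD1 t) //= [in RHS](bigD1 t) //=.
  rewrite (eq_bigr (fun u => Y i u * Y w u)) => [/addIr //|u /= neq_ut].
  case: (ltngtP u t) => [lt_ut|lt_tu|/val_inj eq_ut].
  - by rewrite !IHN // -tN.
  - have := trigX t u lt_tu; have := trigY t u lt_tu; rewrite !mxE => -> ->.
    by rewrite !mulr0.
  - by rewrite eq_ut eqxx in neq_ut.
have SXw : X w t \in S by have := SX t; rewrite mxE.
have SYw : Y w t \in S by have := SY t; rewrite mxE.
have Xww : X w t = Y w t by apply: (sqr_inj _ _ SXw SYw); rewrite /= !expr2 diag_prod.
move=> i; have Xw0 : X w t != 0 by apply: contraNneq S0 => <-.
by apply: (mulIf Xw0); rewrite diag_prod Xww.
Qed.

End TopTriangularBlock.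

Section DotProduct.
Variables (F : fieldType) (n : nat).

Lemma dotpE (u v : 'rV[F]_n) : dotp u v = (u *m v^T) 0 0.
Proof. by rewrite mxE; apply: eq_bigr => i _; rewrite mxE. Qed.

Lemma gram_mxE m (A : 'M[F]_(m, n)) i j : (A *m A^T) i j = dotp (row i A) (row j A).
Proof. by rewrite mxE; apply: eq_bigr => t _; rewrite !mxE. Qed.

Lemma orthogonal_map_trmx (M : 'M[F]_n) : M *m M^T = 1%:M -> orthogonal_map M.
Proof. by move=> MMt u v; rewrite !dotpE trmx_mul !mulmxA -(mulmxA u) MMt mulmx1. Qed.

Lemma orthogonal_mapM (M N : 'M[F]_n) :
  orthogonal_map M -> orthogonal_map N -> orthogonal_map (M *m N).
Proof. by move=> oM oN u v; rewrite !mulmxA oN oM. Qed.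

End DotProduct.

Section Congruence.
Variables (F : finFieldType) (d k : nat).
Implicit Types x y z : config F d k.

Definition edge_mx x : 'M[F]_(k, d) := \matrix_i (x (lift ord0 i) - x ord0).

Lemma row_edge_mx x i : row i (edge_mx x) = x (lift ord0 i) - x ord0.
Proof. by rewrite rowK. Qed.

Lemma affdimE x : affdim x = \rank (edge_mx x).
Proof.
rewrite /affdim.
have -> : \matrix_(i < k.+1) (x i - x ord0) = col_mx (0 : 'M_(1, d)) (edge_mx x).
  apply/matrixP => i j; rewrite !mxE; case: splitP => [i0 i_eq|i' i_eq]; rewrite !mxE.
    by rewrite (_ : i = ord0) ?subrr //; apply: val_inj => /=; rewrite i_eq (ord1 i0).
  by rewrite (_ : i = lift ord0 i') //; exact: val_inj.
exact: (@rank_col_0mx _ k d 1 (edge_mx x)).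
Qed.

Lemma congruent_edgeP x y :
  congruent x y <-> exists2 M, orthogonal_map M & edge_mx y = edge_mx x *m M.
Proof.
split=> [[M [oM [z yE]]]|[M oM edge_xy]].
  exists M => //; apply/row_matrixP => i; rewrite row_mul !row_edge_mx !yE mulmxBl.
  by rewrite opprD addrACA subrr addr0.
exists M; split=> //; exists (y ord0 - x ord0 *m M) => i.
case: (unliftP ord0 i) => [j ->|->]; last by rewrite addrC subrK.
have /eqP := congr1 (row j) edge_xy.
rewrite row_mul !row_edge_mx mulmxBl subr_eq => /eqP ->.
by rewrite addrAC addrA.
Qed.

Lemma congruent_edge_gram x y : congruent x y ->
  edge_mx y *m (edge_mx y)^T = edge_mx x *m (edge_mx x)^T.
Proof.
by case/congruent_edgeP => M oM ->; apply/matrixP => i j; rewrite !gram_mxE !row_mul oM.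
Qed.

Lemma congruent_trans x y z : congruent x y -> congruent y z -> congruent x z.
Proof.
move=> /congruent_edgeP[M oM edge_xy] /congruent_edgeP[N oN edge_yz].
apply/congruent_edgeP; exists (M *m N); first exact: orthogonal_mapM.
by rewrite edge_yz edge_xy mulmxA.
Qed.

Lemma cong_class_refl x : x \in cong_class x.
Proof.
apply/cong_classP/congruent_edgeP; exists 1%:M; last by rewrite mulmx1.
by move=> u v; rewrite !mulmx1.
Qed.

Lemma cong_class_eq x y : congruent x y -> congruent y x -> cong_class x = cong_class y.
Proof.
move=> xy yx; apply/setP => z; apply/cong_classP/cong_classP; exact: congruent_trans.
Qed.

End Congruence.

Lemma pffun_on_setTP (aT rT : finType) (y : rT) (D : {set aT}) (f : {ffun aT -> rT}) :
  reflect (forall a, a \notin D -> f a = y) (f \in pffun_on y D [set: rT]).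
Proof.
apply: (iffP pffun_onP) => [[/subsetP supp _] a aD|outD].
  by apply/eqP; apply: contraNT aD => fa; apply: supp; rewrite inE.
split=> [|b _]; last by rewrite inE.
by apply/subsetP => a; rewrite inE; apply: contraR => aD; rewrite outD ?eqxx.
Qed.

Section LowerBound.
Variables (F : finFieldType) (d k : nat) (dk : (d <= k)%N).

Definition config_of_mx (X : 'M[F]_(k, d)) : config F d k :=
  [ffun j => if unlift ord0 j is Some i then row i X else 0].

Lemma edge_config_of_mx X : edge_mx (config_of_mx X) = X.
Proof. by apply/row_matrixP => i; rewrite row_edge_mx !ffunE liftK unlift_none subr0. Qed.

Definition trig_mx_of (D : {ffun 'I_d -> F}) (L : {ffun 'I_k * 'I_d -> F}) :
    'M[F]_(k, d) :=
  \matrix_(i, j) if (i == j :> nat) then D j else L (i, j).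

Definition trig_params :=
  setX [set D : {ffun 'I_d -> F} | D \in ffun_on (sign_reps F)]
       [set L : {ffun 'I_k * 'I_d -> F} |
          L \in pffun_on 0 [set p : 'I_k * 'I_d | (p.2 < p.1)%N] setT].

Lemma card_trig_params :
  #|trig_params| = (#|sign_reps F| ^ d * #|F| ^ (k * d - 'C(d.+1, 2)))%N.
Proof.
rewrite cardsX (cardsE (ffun_on _)) (cardsE (pffun_on _ _ _)) card_ffun_on card_pffun_on.
by rewrite card_ord cardsT card_ord_gtn_pairs.
Qed.

Lemma top_block_trig_mx_of p : p \in trig_params ->
  is_trig_mx (top_block dk (trig_mx_of p.1 p.2)) /\
  forall s, top_block dk (trig_mx_of p.1 p.2) s s \in sign_reps F.
Proof.
case: p => D L; rewrite in_setX !inE /= => /andP[/ffun_onP DS /pffun_on_setTP Llow].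
split=> [|s]; last by rewrite !mxE eqxx DS.
apply/is_trig_mxP => s t lt_st; rewrite !mxE /= (ltn_eqF lt_st) Llow //.
by rewrite inE -leqNgt (ltnW lt_st).
Qed.

Lemma trig_mx_of_nondeg p :
  p \in trig_params -> config_of_mx (trig_mx_of p.1 p.2) \in nondeg F d k.
Proof.
move=> /top_block_trig_mx_of[trig diag]; rewrite inE /inD affdimE edge_config_of_mx.
by rewrite (rank_trig_top_block trig) ?ltnn ?andbF // => s; apply: sign_reps_neq0.
Qed.

Lemma trig_mx_of_inj : {in trig_params &, injective (fun p => trig_mx_of p.1 p.2)}.
Proof.
move=> [D L] [D' L']; rewrite !in_setX !inE /=.
move=> /andP[_ /pffun_on_setTP Llow] /andP[_ /pffun_on_setTP L'low] /matrixP eqDL.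
congr (_, _); apply/ffunP.
  by move=> s; have := eqDL (widen_ord dk s) s; rewrite !mxE eqxx.
move=> [i j]; case: (boolP ((i, j) \in [set p : 'I_k * 'I_d | (p.2 < p.1)%N])) => ij_low.
  by have := eqDL i j; rewrite !mxE gtn_eqF //; move: ij_low; rewrite inE.
by rewrite Llow ?L'low.
Qed.

Lemma cong_class_trig_mx_of_inj :
  {in trig_params &, injective (fun p => cong_class (config_of_mx (trig_mx_of p.1 p.2)))}.
Proof.
move=> p q pP qP eq_class; apply: (trig_mx_of_inj pP qP) => /=.
set x := config_of_mx _ in eq_class; set y := config_of_mx _ in eq_class.
have /congruent_edge_gram : congruent x y.
  by apply/cong_classP; rewrite eq_class cong_class_refl.
rewrite !edge_config_of_mx => /esym gram_eq.
have [trig_p diag_p] := top_block_trig_mx_of pP.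
have [trig_q diag_q] := top_block_trig_mx_of qP.
apply: (trig_gram_inj _ (@sign_reps_sqr_inj F)) trig_p trig_q diag_p diag_q gram_eq.
by apply/negP => /sign_reps_neq0; rewrite eqxx.
Qed.

Lemma lower_bound : odd #|F| ->
  (#|F| ^ (d * k.+1 - 'C(d.+1, 2)) <= 3 ^ d * #|Delta (nondeg F d k)|)%N.
Proof.
move=> oddF.
have params_le : (#|trig_params| <= #|Delta (nondeg F d k)|)%N.
  rewrite -(card_in_imset cong_class_trig_mx_of_inj); apply: subset_leq_card.
  by apply/subsetP => _ /imsetP[p pP ->]; apply: imset_f; apply: trig_mx_of_nondeg.
apply: leq_trans (leq_mul (leqnn _) params_le).
rewrite card_trig_params exponent_split_trig // expnD mulnA -expnMn leq_mul2r.
case: (posnP d) => [d0|d_gt0]; first by rewrite d0 !expn0 leqnn orbT.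
by rewrite leq_exp2r // leq_card_sign_reps ?orbT.
Qed.

End LowerBound.

Lemma card_dep_pairs (T U : finType) (A : {set T}) (B : T -> {set U}) :
  #|[set p : T * U | (p.1 \in A) && (p.2 \in B p.1)]| = (\sum_(t in A) #|B t|)%N.
Proof.
rewrite -sum1dep_card -(pair_big_dep (mem A) (fun t u => u \in B t) (fun _ _ => 1%N)) /=.
by apply: eq_bigr => t _; rewrite sum1_card.
Qed.

Lemma leq_card_imset_factor (T U V : finType) (S : {set T}) (f : T -> U) (g : T -> V) :
  {in S &, forall x y, g x = g y -> f x = f y} -> (#|f @: S| <= #|g @: S|)%N.
Proof.
move=> gf; have [->|[x0 x0S]] := set_0Vmem S; first by rewrite !imset0 cards0.
pose h v := if [pick x in S | g x == v] is Some x then f x else f x0.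
apply: leq_trans (leq_imset_card h _); apply: subset_leq_card.
apply/subsetP => _ /imsetP[x xS ->].
apply/imsetP; exists (g x); first exact: imset_f.
rewrite /h; case: pickP => [y /andP[yS /eqP gyx]|/(_ x)]; first exact: gf.
by rewrite xS eqxx.
Qed.

Section GramCode.
Variables (F : finFieldType) (m n : nat).
Implicit Types (P Q : 'M[F]_(m, n)) (s : {ffun 'I_n -> 'I_m}).

(* For a Gram block the square part [rowsub s P] is symmetric, so only its upper
   triangle is recorded. *)
Definition gram_code s P : {ffun 'I_n * 'I_n -> F} * {ffun 'I_m * 'I_n -> F} :=
  ([ffun p : 'I_n * 'I_n => if (p.1 <= p.2)%N then P (s p.1) p.2 else 0],
   [ffun p : 'I_m * 'I_n => if p.1 \in codom s then 0 else P p.1 p.2]).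

Definition gram_codes s :=
  setX [set G : {ffun 'I_n * 'I_n -> F} |
          G \in pffun_on 0 [set p : 'I_n * 'I_n | (p.1 <= p.2)%N] setT]
       [set C : {ffun 'I_m * 'I_n -> F} |
          C \in pffun_on 0 [set p : 'I_m * 'I_n | p.1 \notin codom s] setT].

Lemma gram_code_inj s P Q :
  (rowsub s P)^T = rowsub s P -> (rowsub s Q)^T = rowsub s Q ->
  gram_code s P = gram_code s Q -> P = Q.
Proof.
move=> /matrixP symP /matrixP symQ [/ffunP eqG /ffunP eqC].
have symP' a b : P (s a) b = P (s b) a by have := symP b a; rewrite !mxE.
have symQ' a b : Q (s a) b = Q (s b) a by have := symQ b a; rewrite !mxE.
apply/matrixP => j b; case: (boolP (j \in codom s)) => [/codomP[a ->]|js]; last first.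
  by have := eqC (j, b); rewrite !ffunE /= (negbTE js).
case: (leqP a b) => [le_ab|lt_ba]; first by have := eqG (a, b); rewrite !ffunE /= le_ab.
by rewrite symP' symQ'; have := eqG (b, a); rewrite !ffunE /= ltnW.
Qed.

Lemma gram_code_in s P : gram_code s P \in gram_codes s.
Proof.
rewrite in_setX !inE; apply/andP; split; apply/pffun_on_setTP => p; rewrite inE ffunE.
  by move/negbTE ->.
by rewrite negbK => ->.
Qed.

Lemma card_gram_codes s :
  injective s -> #|gram_codes s| = (#|F| ^ ('C(n.+1, 2) + (m - n) * n))%N.
Proof.
move=> inj_s; rewrite cardsX (cardsE (pffun_on _ _ _)) (cardsE (pffun_on _ _ _)).
rewrite !card_pffun_on cardsT expnD card_ord_leq_pairs //.
have -> : [set p : 'I_m * 'I_n | p.1 \notin codom s] = setX (~: [set i in codom s]) setT.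
  by apply/setP => -[i j]; rewrite !inE andbT.
by rewrite cardsX cardsCs setCK cardsE card_codom // cardsT !card_ord.
Qed.

End GramCode.

Section UpperBound.
Variables (F : finFieldType) (d k : nat).
Implicit Types x y : config F d k.

Definition gram_block x (s : {ffun 'I_d -> 'I_k}) : 'M[F]_(k, d) :=
  edge_mx x *m (rowsub s (edge_mx x))^T.

(* [None] when the edges do not span [F^d], i.e. within [nondeg] when all
   points coincide. *)
Definition class_code x :
    option ({ffun 'I_d -> 'I_k} * ({ffun 'I_d * 'I_d -> F} * {ffun 'I_k * 'I_d -> F})) :=
  if [pick s : {ffun 'I_d -> 'I_k} | rowsub s (edge_mx x) \in unitmx] is Some s
  then Some (s, gram_code s (gram_block x s)) else None.

Definition class_codes :=
  [set t : {ffun 'I_d -> 'I_k} * ({ffun 'I_d * 'I_d -> F} * {ffun 'I_k * 'I_d -> F}) |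
     (t.1 \in [set s : {ffun 'I_d -> 'I_k} | injectiveb s]) &&
     (t.2 \in gram_codes F t.1)].

Lemma edge_mx_eq0 x : x \in nondeg F d k ->
  (forall s : {ffun 'I_d -> 'I_k}, rowsub s (edge_mx x) \notin unitmx) -> edge_mx x = 0.
Proof.
rewrite inE /inD affdimE => nondeg_x no_basis.
apply/eqP; rewrite -mxrank_eq0 eqn0Ngt; apply: contraNN nondeg_x => rank_gt0.
rewrite rank_gt0 ltn_neqAle rank_leq_col andbT; apply/eqP => rank_d.
by have [s] := exists_rowsub_unitmx rank_d; apply/negP.
Qed.

Lemma class_code_congruent x y : x \in nondeg F d k -> y \in nondeg F d k ->
  class_code x = class_code y -> congruent x y.
Proof.
move=> nondeg_x nondeg_y; rewrite /class_code.
case: pickP => [s unit_s|no_x]; case: pickP => [s' _|no_y] //.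
  move=> /Some_inj eq_codes; have /= eq_s := congr1 fst eq_codes.
  move: (congr1 snd eq_codes); rewrite /= -eq_s.
  move=> /(gram_code_inj (tr_rowsub_gram _ _) (tr_rowsub_gram _ _)) eq_block.
  have [M MMt edge_xy] := gram_orthogonal unit_s eq_block.
  by apply/congruent_edgeP; exists M => //; apply: orthogonal_map_trmx.
have edge_x0 : edge_mx x = 0 by apply: edge_mx_eq0 => // s; apply: negbT (no_x s).
have edge_y0 : edge_mx y = 0 by apply: edge_mx_eq0 => // s; apply: negbT (no_y s).
move=> _; apply/congruent_edgeP; exists 1%:M; last by rewrite edge_x0 edge_y0 mul0mx.
by apply: orthogonal_map_trmx; rewrite trmx1 mulmx1.
Qed.

Lemma class_code_in x : class_code x \in None |: Some @: class_codes.
Proof.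
rewrite /class_code; case: pickP => [s unit_s|_]; rewrite !inE //=.
apply/imsetP; exists (s, gram_code s (gram_block x s)) => //.
rewrite inE /= gram_code_in andbT inE; apply/injectiveP.
exact: rowsub_unitmx_inj unit_s.
Qed.

Lemma card_class_codes :
  (#|class_codes| <= k ^ d * #|F| ^ ('C(d.+1, 2) + (k - d) * d))%N.
Proof.
rewrite card_dep_pairs.
rewrite (eq_bigr (fun _ => #|F| ^ ('C(d.+1, 2) + (k - d) * d)))%N => [|s]; last first.
  by rewrite inE => /injectiveP; apply: card_gram_codes.
rewrite sum_nat_const leq_mul2r; apply/orP; right.
by apply: leq_trans (max_card _) _; rewrite card_ffun !card_ord.
Qed.

Lemma upper_bound : (d <= k)%N ->
  (#|Delta (nondeg F d k)| <= (1 + k ^ d) * #|F| ^ (d * k.+1 - 'C(d.+1, 2)))%N.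
Proof.
move=> dk.
have classes_le : (#|Delta (nondeg F d k)| <= #|class_code @: nondeg F d k|)%N.
  apply: leq_card_imset_factor => x y nondeg_x nondeg_y eq_code.
  by apply: cong_class_eq; apply: class_code_congruent.
have codes_sub : class_code @: nondeg F d k \subset None |: Some @: class_codes.
  by apply/subsetP => _ /imsetP[x _ ->]; apply: class_code_in.
apply: leq_trans classes_le (leq_trans (subset_leq_card codes_sub) _).
rewrite cardsU1 card_imset; last exact: Some_inj.
rewrite mulnDl mul1n exponent_split_gram // leq_add ?card_class_codes //.
apply: leq_trans (leq_b1 _) _; rewrite expn_gt0; apply/orP; left.
by apply/card_gt0P; exists 0.
Qed.

End UpperBound.

Unset Implicit Arguments.

Theorem theorem3 (d k : nat) :
  (1 <= d)%N -> (d <= k)%N ->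
  exists c1 c2 : rat, 0 < c1 /\ 0 < c2 /\
    forall F : finFieldType, odd #|F| ->
      let e := (d * k.+1 - 'C(d.+1, 2))%N in
      c1 * (#|F|%:R) ^+ e <= (#|Delta (nondeg F d k)|)%:R
      /\ (#|Delta (nondeg F d k)|)%:R <= c2 * (#|F|%:R) ^+ e.
Proof.
move=> _ dk.
have pos3 : 0 < (3 ^ d)%:R :> rat by rewrite ltr0n expn_gt0.
exists (3 ^ d)%:R^-1, (1 + k ^ d)%:R; split; first by rewrite invr_gt0.
split=> [|F oddF e]; first by rewrite ltr0n.
split; last by rewrite -natrX -natrM ler_nat upper_bound.
by rewrite ler_pdivrMl // -natrX -natrM ler_nat lower_bound.
Qed.
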